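(* Let $(X,d)$ be a compact metric space and let $C(X)$ denote the space of all continuous functions $f:X\to\mathbb{R}$. If $X$ is uncountable, then there exists no reproducing kernel Hilbert space $H$ of functions on $X$ such that $C(X)\subset H$.
   Context: A reproducing kernel Hilbert space (RKHS) on a set $X$ is a Hilbert space $H$ consisting of real-valued functions $f:X\to\mathbb{R}$ (with the pointwise vector space operations) such that for every $x\in X$ the point evaluation $f\mapsto f(x)$ is a continuous linear functional on $H$; equivalently, $H$ has a reproducing kernel $k:X\times X\to\mathbb{R}$ with $k(\cdot,x)\in H$ and $f(x)=\langle f,k(\cdot,x)\rangle_H$ for all $f\in H$, $x\in X$. The inclusion $C(X)\subset H$ is meant as sets of functions on $X$. *)

From HB Require Import structures.
From mathcomp Require Import all_boot all_order all_algebra.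
From mathcomp Require Import all_classical all_reals all_analysis.
Set Implicit Arguments. Unset Strict Implicit. Unset Printing Implicit Defensive.
Import Order.TTheory GRing.Theory Num.Theory.
Local Open Scope classical_set_scope.
Local Open Scope ring_scope.

Record RKHS (R : realType) (X : Type) := {
  rk_carrier : set (X -> R);
  rk_ip : (X -> R) -> (X -> R) -> R;
  rk_zero : rk_carrier (fun _ => 0);
  rk_lin : forall (a : R) f g, rk_carrier f -> rk_carrier g ->
      rk_carrier (fun x => a * f x + g x);
  rk_ip_sym : forall f g, rk_carrier f -> rk_carrier g -> rk_ip f g = rk_ip g f;
  rk_ip_lin : forall (a : R) f g h, rk_carrier f -> rk_carrier g -> rk_carrier h ->
      rk_ip (fun x => a * f x + g x) h = a * rk_ip f h + rk_ip g h;
  rk_ip_ge0 : forall f, rk_carrier f -> 0 <= rk_ip f f;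
  rk_ip_def : forall f, rk_carrier f -> rk_ip f f = 0 -> f = (fun _ => 0);
  rk_complete : forall u : nat -> (X -> R), (forall n, rk_carrier (u n)) ->
      (forall e : R, 0 < e -> exists N : nat, forall m n : nat, (N <= m)%N -> (N <= n)%N ->
          Num.sqrt (rk_ip (fun x => u m x - u n x) (fun x => u m x - u n x)) < e) ->
      exists g, rk_carrier g /\
        (forall e : R, 0 < e -> exists N : nat, forall n : nat, (N <= n)%N ->
          Num.sqrt (rk_ip (fun x => u n x - g x) (fun x => u n x - g x)) < e);
  rk_eval_cont : forall x : X, exists C : R, forall f, rk_carrier f ->
      `| f x | <= C * Num.sqrt (rk_ip f f)
}.

(* If C(X) is contained in H, the inclusion C(X) -> H is bounded: a Baire
   category argument for the uniform metric yields a uniform ball of continuous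
   functions that are uniform limits of functions of H-norm at most M, and a
   geometric series argument (using completeness of H and continuity of point
   evaluations) turns this into |f|_H <= K for all continuous f with |f| <= 1.
   Point evaluations are bounded, |f(x)| <= C(x) |f|_H; since X is uncountable
   some sublevel set {C <= n} contains m > n^2 K^2 points.  Bumps at these
   points with pairwise disjoint supports have |phi_i|_H >= 1/n, and a greedy
   choice of signs gives |sum +-phi_i|_H^2 >= m/n^2, whereas |sum +-phi_i| <= 1
   forces |sum +-phi_i|_H <= K. *)

From HB Require Import structures.
From mathcomp Require Import all_boot all_order all_algebra.
From mathcomp Require Import all_classical all_reals all_analysis.
From mathcomp Require Import ring lra.
Import Order.TTheory GRing.Theory Num.Theory numFieldNormedType.Exports.
Local Open Scope classical_set_scope.
Local Open Scope ring_scope.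
Set Implicit Arguments. Unset Strict Implicit. Unset Printing Implicit Defensive.

Lemma dependent_choice_nat (T : Type) (P : nat -> T -> Prop)
    (Q : nat -> T -> T -> Prop) (t0 : T) :
  P 0%N t0 -> (forall n t, P n t -> exists2 t', P n.+1 t' & Q n t t') ->
  exists u : nat -> T, u 0%N = t0 /\ forall n, P n (u n) /\ Q n (u n) (u n.+1).
Proof.
move=> P0 step; pose S := {nt : nat * T | P nt.1 nt.2}.
have next (s : S) : {s' : S | (sval s').1 = (sval s).1.+1 /\
                              Q (sval s).1 (sval s).2 (sval s').2}.
  case: s => -[n t] /= Pnt; apply: cid; have [t' Pt' Qt'] := step n t Pnt.
  by exists (exist _ (n.+1, t') Pt').
have [u [u0 uS]] := dependent_choice next (exist _ (0%N, t0) P0).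
have un n : (sval (u n)).1 = n.
  by elim: n => [|n IH]; rewrite ?u0 // (proj1 (uS n)) IH.
exists (fun n => (sval (u n)).2); split; first by rewrite u0.
move=> n; split; first by rewrite -{1}(un n); exact: svalP (u n).
by have [_] := uS n; rewrite un.
Qed.

Lemma exists_invexp2_lt (R : realType) (e : R) : 0 < e -> exists k : nat, 2 ^- k < e.
Proof.
move=> e_gt0; have [k _ /(_ k (leqnn k))] := near_infty_natSinv_expn_lt (PosNum e_gt0).
by rewrite div1r; exists k.
Qed.

Lemma cauchy_seq_limit (R : realType) (u r : nat -> R) :
  (forall k j, (k <= j)%N -> `|u j - u k| <= r k) ->
  (forall e, 0 < e -> exists k, r k < e) ->
  exists l, forall k, `|l - u k| <= r k.
Proof.
move=> u_near r_small.
have u_cvg : cvg (u n @[n --> \oo]).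
  apply: cauchy_cvg; apply: cauchy_exP => e e_gt0.
  have [k rk] := r_small e e_gt0; exists (u k).
  apply: filterS (nbhs_infty_ge k) => n kn.
  by rewrite -ball_normE /ball_ /= distrC (le_lt_trans (u_near _ _ kn)).
exists (lim (u n @[n --> \oo])) => k.
have dist_cvg : `|u n - u k| @[n --> \oo] --> `|lim (u n @[n --> \oo]) - u k|.
  by apply: cvg_norm; apply: cvgB => //; exact: cvg_cst.
apply: (cvgr_to_le dist_cvg); apply: filterS (nbhs_infty_ge k) => n.
exact: u_near.
Qed.

Section uniform_approximation.
Variables (R : realType) (X : topologicalType).
Implicit Types (f g : X -> R) (r : R).

Definition uniformly_within r f g := forall x, `|f x - g x| <= r.

Lemma continuous_uniform_approx f :
  (forall e, 0 < e -> exists2 g, continuous g & uniformly_within e f g) ->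
  continuous f.
Proof.
move=> f_approx x; apply/cvgrPdist_lt => e e_gt0.
have [g cg fg] := f_approx (e / 3) (divr_gt0 e_gt0 (ltr0Sn _ 2)).
near=> y.
have gxy : `|g x - g y| < e / 3.
  by near: y; move/cvgrPdist_lt : (cg x); apply; exact: divr_gt0.
have := ler_normD (f x - g x + (g x - g y)) (g y - f y).
have := ler_normD (f x - g x) (g x - g y).
have := fg x; have := fg y; rewrite (distrC (f y)).
have -> : f x - g x + (g x - g y) + (g y - f y) = f x - f y by ring.
lra.
Unshelve. all: by end_near.
Qed.

Lemma nested_uniform_balls (f : nat -> X -> R) (r : nat -> R) :
  (forall k, continuous (f k)) -> (forall k, 0 < r k) ->
  (forall k, uniformly_within (r k - r k.+1) (f k.+1) (f k)) ->
  (forall e, 0 < e -> exists k, r k < e) ->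
  exists2 F, continuous F & forall k, uniformly_within (r k) F (f k).
Proof.
move=> cf r_gt0 f_step r_small.
have f_near k j : (k <= j)%N -> uniformly_within (r k) (f j) (f k).
  have f_nearD i : uniformly_within (r k - r (k + i)%N) (f (k + i)%N) (f k).
    elim: i => [|i IH] x; first by rewrite addn0 !subrr normr0.
    have := ler_normD (f (k + i).+1 x - f (k + i)%N x) (f (k + i)%N x - f k x).
    by rewrite addnS addrA subrK; have := f_step (k + i)%N x; have := IH x; lra.
  move=> /subnKC <- x; have := f_nearD (j - k)%N x; have := r_gt0 (k + (j - k))%N.
  lra.
have /choice[F FP] : forall x, exists l, forall k, `|l - f k x| <= r k.
  by move=> x; apply: cauchy_seq_limit r_small => k j /f_near; apply.
exists F => [|k x]; last exact: FP.
apply: continuous_uniform_approx => e /r_small[k rk]; exists (f k) => // x.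
exact: le_trans (FP x k) (ltW rk).
Qed.

Definition approximable (N : (X -> R) -> R) (M : R) f :=
  forall d, 0 < d -> exists g, [/\ continuous g, N g <= M & uniformly_within d f g].

(* N is arbitrary: if no such ball existed, nested uniform balls B(f_k, r_k)
   on which N > k would have a common point F with N F > k for every k. *)
Lemma uniform_Baire (N : (X -> R) -> R) :
  exists M g0 r, [/\ 0 < r, continuous g0 &
    forall f, continuous f -> uniformly_within r f g0 -> approximable N M f].
Proof.
apply: contrapT => no_ball.
have bad M g0 r : 0 < r -> continuous g0 -> exists f d, [/\ continuous f,
    uniformly_within r f g0, 0 < d &
    forall g, continuous g -> uniformly_within d f g -> M < N g].
  move=> r_gt0 cg0; apply: contrapT => no_f; apply: no_ball.
  exists M, g0, r; split=> // f cf fg0 d d_gt0; apply: contrapT => no_g.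
  apply: no_f; exists f, d; split=> // g cg fg; rewrite ltNge; apply/negP => NgM.
  by apply: no_g; exists g.
have [||u [_ uP]] := @dependent_choice_nat ((X -> R) * R)
  (fun k p => [/\ continuous p.1, 0 < p.2 & p.2 <= 2 ^- k])
  (fun k p p' => [/\ p'.2 <= p.2 / 2, uniformly_within (p.2 / 2) p'.1 p.1 &
     forall g, continuous g -> uniformly_within p'.2 p'.1 g -> k%:R < N g])
  (cst 0, 1).
- by split; [exact: cst_continuous | | rewrite expr0 invr1].
- move=> k [g0 r] [/= cg0 r_gt0 r_le].
  have [f [d [cf fg0 d_gt0 fd]]] := bad k%:R g0 (r / 2) (divr_gt0 r_gt0 (ltr0Sn _ 1)) cg0.
  have rd_le : Num.min d (r / 2) <= r / 2 by rewrite ge_min lexx orbT.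
  exists (f, Num.min d (r / 2)); split => //=.
  + by rewrite lt_min d_gt0 divr_gt0.
  + by rewrite (le_trans rd_le) // exprS invfM [r / 2]mulrC ler_wpM2l.
  + by move=> g cg fg; apply: fd => // x; rewrite (le_trans (fg x)) // ge_min lexx.
pose f k := (u k).1; pose r k := (u k).2.
have [||||F cF Ff] := @nested_uniform_balls f r.
- by move=> k; have [[]] := uP k.
- by move=> k; have [[]] := uP k.
- by move=> k x; have [_ [r_half f_half _]] := uP k; have := f_half x; lra.
- move=> e /exists_invexp2_lt[k ek]; exists k.
  by have [[_ _ rk] _] := uP k; exact: le_lt_trans rk ek.
pose k := (Num.truncn (N F)).+1.
have [_ [_ _ /(_ F cF) NF]] := uP k.
have := truncnS_gt (N F); rewrite -/k.
suff : k%:R < N F by lra.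
by apply: NF => x; rewrite distrC; exact: Ff.
Qed.

End uniform_approximation.

Section rkhs_geometry.
Variables (R : realType) (X : Type) (H : RKHS R X).
Local Notation carrier := (rk_carrier H).
Local Notation ip := (rk_ip H).
Implicit Types (f g h : X -> R) (a : R).

Lemma rk_carrierZD a f g : carrier f -> carrier g -> carrier (a *: f + g).
Proof. exact: rk_lin. Qed.

Lemma rk_carrierZ a f : carrier f -> carrier (a *: f).
Proof. by move=> hf; rewrite -[_ *: f]addr0; exact: rk_carrierZD (rk_zero H). Qed.

Lemma rk_carrierB f g : carrier f -> carrier g -> carrier (f - g).
Proof. by move=> hf hg; rewrite addrC -scaleN1r; exact: rk_carrierZD. Qed.

Lemma rk_ipZDl a f g h : carrier f -> carrier g -> carrier h ->
  ip (a *: f + g) h = a * ip f h + ip g h.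
Proof. exact: rk_ip_lin. Qed.

Lemma rk_ip0l h : carrier h -> ip 0 h = 0.
Proof.
move=> hh; have := rk_ipZDl 1 (rk_zero H) (rk_zero H) hh.
by rewrite scale1r addr0 mul1r; lra.
Qed.

Lemma rk_ipZl a f h : carrier f -> carrier h -> ip (a *: f) h = a * ip f h.
Proof.
move=> hf hh; have := rk_ipZDl a hf (rk_zero H) hh.
by rewrite addr0 rk_ip0l // addr0.
Qed.

Lemma rk_ip_sqrZD a f g : carrier f -> carrier g ->
  ip (a *: f + g) (a *: f + g) = a ^+ 2 * ip f f + 2 * a * ip f g + ip g g.
Proof.
move=> hf hg; have hfg := rk_carrierZD a hf hg.
rewrite rk_ipZDl // (rk_ip_sym hf hfg) (rk_ip_sym hg hfg) !rk_ipZDl //.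
by rewrite (rk_ip_sym hg hf); ring.
Qed.

Lemma rk_cauchy_schwarz f g : carrier f -> carrier g ->
  ip f g ^+ 2 <= ip f f * ip g g.
Proof.
move=> hf hg; have [ff0|ff_neq0] := eqVneq (ip f f) 0.
  have f0 : f = 0 by exact: rk_ip_def hf ff0.
  by rewrite f0 rk_ip0l // rk_ip0l ?expr0n ?mul0r //; exact: rk_zero.
have ff_gt0 : 0 < ip f f by rewrite lt_neqAle eq_sym ff_neq0 rk_ip_ge0.
(* evaluate the nonnegative quadratic form t |-> ip (t f + g) (t f + g)
   at its minimiser *)
have := rk_ip_ge0 (rk_carrierZD (- ip f g / ip f f) hf hg).
rewrite rk_ip_sqrZD //.
have -> : (- ip f g / ip f f) ^+ 2 * ip f f + 2 * (- ip f g / ip f f) * ip f g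
    + ip g g = ip g g - ip f g ^+ 2 / ip f f by field.
by rewrite subr_ge0 ler_pdivrMr // mulrC.
Qed.

Definition rk_norm f := Num.sqrt (ip f f).
Local Notation "`| f |_H" := (rk_norm f) (format "`| f |_H").

Lemma rk_norm_ge0 f : 0 <= `|f|_H.
Proof. exact: sqrtr_ge0. Qed.

Lemma rk_normK f : carrier f -> `|f|_H ^+ 2 = ip f f.
Proof. by move=> hf; rewrite sqr_sqrtr // rk_ip_ge0. Qed.

Lemma rk_ip_le f g : carrier f -> carrier g -> `|ip f g| <= `|f|_H * `|g|_H.
Proof.
move=> hf hg; rewrite -sqrtr_sqr /rk_norm -sqrtrM ?rk_ip_ge0 //.
by apply: ler_wsqrtr; exact: rk_cauchy_schwarz.
Qed.

Lemma rk_normZ a f : carrier f -> `|a *: f|_H = `|a| * `|f|_H.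
Proof.
move=> hf; have haf := rk_carrierZ a hf.
rewrite /rk_norm rk_ipZl // (rk_ip_sym hf haf) rk_ipZl // mulrA -expr2.
by rewrite sqrtrM ?sqr_ge0 // sqrtr_sqr.
Qed.

Lemma rk_normZD a f g : carrier f -> carrier g ->
  `|a *: f + g|_H <= `|a| * `|f|_H + `|g|_H.
Proof.
move=> hf hg; have hafg := rk_carrierZD a hf hg.
have rhs_ge0 : 0 <= `|a| * `|f|_H + `|g|_H by rewrite addr_ge0 ?mulr_ge0 ?rk_norm_ge0.
rewrite -(ler_pXn2r (_ : 0 < 2)%N) ?nnegrE ?rk_norm_ge0 //.
rewrite rk_normK // rk_ip_sqrZD // -(rk_normK hf) -(rk_normK hg).
have : a * ip f g <= `|a| * (`|f|_H * `|g|_H).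
  by rewrite (le_trans (ler_norm _)) // normrM ler_wpM2l // rk_ip_le.
rewrite -[a ^+ 2]real_normK ?num_real //; nra.
Qed.

Lemma rk_normD f g : carrier f -> carrier g -> `|f + g|_H <= `|f|_H + `|g|_H.
Proof. by move=> hf hg; have := rk_normZD 1 hf hg; rewrite scale1r normr1 mul1r. Qed.

Lemma rk_normB f g : carrier f -> carrier g -> `|f - g|_H <= `|f|_H + `|g|_H.
Proof.
move=> hf hg; have := rk_normZD (-1) hg hf.
by rewrite scaleN1r normrN normr1 mul1r [- g + f]addrC [`|g|_H + _]addrC.
Qed.

Lemma rk_cauchy_pointwise_limit (u : nat -> X -> R) f :
  (forall n, carrier (u n)) ->
  (forall e, 0 < e -> exists K : nat, forall m n, (K <= m)%N -> (K <= n)%N ->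
     `|u m - u n|_H < e) ->
  (forall x, u n x @[n --> \oo] --> f x) ->
  carrier f /\
  forall e, 0 < e -> exists K : nat, forall n, (K <= n)%N -> `|u n - f|_H < e.
Proof.
move=> hu u_cauchy u_f.
have [g [hg u_g]] := rk_complete hu u_cauchy.
suff -> : f = g by [].
apply/funext => x; apply: (norm_cvg_unique (u_f x)).
have [C evalC] := rk_eval_cont H x.
apply/cvgrPdist_le => e e_gt0.
have [K uK] := u_g (e / (`|C| + 1)) (divr_gt0 e_gt0 (ltr_pwDr ltr01 (normr_ge0 C))).
exists K => // n /= Kn.
have := evalC _ (rk_carrierB (hu n) hg); rewrite /= distrC.
have := uK n Kn; rewrite -/(rk_norm (u n - g)) ltr_pdivlMr ?ltr_pwDr ?normr_ge0 //.
have := rk_norm_ge0 (u n - g); have := ler_norm C.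
rewrite /=; nra.
Qed.

Lemma rk_norm_telescope (h : nat -> X -> R) (a : nat -> R) :
  (forall j, carrier (h j)) -> (forall j, `|h j - h j.+1|_H <= a j - a j.+1) ->
  forall m n, (m <= n)%N -> `|h m - h n|_H <= a m - a n.
Proof.
move=> hH h_step m n /subnKC <-; elim: (n - m)%N => [|i IH].
  by rewrite addn0 !subrr /rk_norm rk_ip0l ?sqrtr0 //; exact: rk_zero.
rewrite addnS -(subrKA (a (m + i)%N)) (le_trans _ (lerD IH (h_step (m + i)%N))) //.
have -> : h m - h (m + i).+1 = (h m - h (m + i)%N) + (h (m + i)%N - h (m + i).+1).
  by rewrite addrA subrK.
by apply: rk_normD; apply: rk_carrierB.
Qed.

Lemma rk_norm_le_geometric (h : nat -> X -> R) (c : R) :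
  (forall j, carrier (h j)) -> (forall j, `|h j - h j.+1|_H <= c * 2 ^- j) ->
  (forall x, h n x @[n --> \oo] --> 0) ->
  `|h 0%N|_H <= 2 * c.
Proof.
move=> hH h_step h_cvg0.
have c_ge0 : 0 <= c.
  by have := le_trans (rk_norm_ge0 _) (h_step 0%N); rewrite expr0 invr1 mulr1.
have h_tail m n : (m <= n)%N -> `|h m - h n|_H <= 2 * c * 2 ^- m.
  move=> mn; apply: le_trans (rk_norm_telescope (a := fun j => 2 * c * 2 ^- j) hH _ mn) _.
    move=> j; have -> : 2 * c * 2 ^- j - 2 * c * 2 ^- j.+1 = c * 2 ^- j.
      by rewrite exprS invfM; field.
    exact: h_step.
  by rewrite gerBl mulr_ge0 ?mulr_ge0 // invr_ge0 exprn_ge0.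
pose u n := h 0%N - h n.
have uH n : carrier (u n) by apply: rk_carrierB.
have [||_ u_lim] := @rk_cauchy_pointwise_limit u (h 0%N) uH.
- move=> e e_gt0.
  have [K Ke] := exists_invexp2_lt
    (divr_gt0 e_gt0 (ltr_pwDr ltr01 (mulr_ge0 (ler0n _ 4) c_ge0))).
  exists K => m n Km Kn.
  have -> : u m - u n = (h K - h m) - (h K - h n) by rewrite /u; ring.
  apply: le_lt_trans (rk_normB (rk_carrierB (hH K) (hH m)) (rk_carrierB (hH K) (hH n))) _.
  have := lerD (h_tail K m Km) (h_tail K n Kn).
  move: Ke; rewrite ltr_pdivlMr ?ltr_pwDr ?mulr_ge0 //; nra.
- move=> x; rewrite -[h 0%N x]subr0; apply: cvgB => //; exact: cvg_cst.
apply/ler_addgt0Pr => e e_gt0; have [K uK] := u_lim e e_gt0.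
have -> : h 0%N = u K - (u K - h 0%N) by rewrite subKr.
apply: le_trans (rk_normB (uH K) (rk_carrierB (uH K) (hH 0%N))) _.
apply: lerD; last exact: ltW (uK K (leqnn K)).
by have := h_tail 0%N K isT; rewrite expr0 invr1 mulr1.
Qed.

(* Each sign is chosen so that the cross term with the previous partial sum
   is nonnegative. *)
Definition sign_sum (I : Type) (v : I -> X -> R) (s : seq I) : X -> R :=
  foldr (fun i V => (-1) ^+ (ip (v i) V < 0)%R *: v i + V) 0 s.

Lemma sign_sum_carrier (I : Type) (v : I -> X -> R) s :
  (forall i, carrier (v i)) -> carrier (sign_sum v s).
Proof.
by move=> hv; elim: s => [|i s IH] /=; [exact: rk_zero | exact: rk_carrierZD].
Qed.

Lemma sign_sum_sqnorm (I : Type) (v : I -> X -> R) s : (forall i, carrier (v i)) ->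
  \sum_(i <- s) ip (v i) (v i) <= ip (sign_sum v s) (sign_sum v s).
Proof.
move=> hv; elim: s => [|i s IH]; first by rewrite big_nil rk_ip_ge0 //; exact: rk_zero.
rewrite big_cons /= rk_ip_sqrZD ?sqrr_sign ?mul1r //; last exact: sign_sum_carrier.
have : 0 <= (-1) ^+ (ip (v i) (sign_sum v s) < 0)%R * ip (v i) (sign_sum v s).
  by rewrite mulr_sign; case: ltP => [/ltW|]; rewrite ?oppr_ge0.
nra.
Qed.

Lemma sign_sum_le1 (I : eqType) (v : I -> X -> R) s x : uniq s ->
  (forall i, `|v i x| <= 1) ->
  (forall i j, i \in s -> j \in s -> i != j -> v i x = 0 \/ v j x = 0) ->
  `|sign_sum v s x| <= 1.
Proof.
have sign_sum0 s' : (forall i, i \in s' -> v i x = 0) -> sign_sum v s' x = 0.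
  elim: s' => [|i s' IH] v0 //=; rewrite !fctE /= v0 ?mem_head // scaler0 add0r.
  by apply: IH => j js'; rewrite v0 // in_cons js' orbT.
elim: s => [|i s IH] /= => [_ _ _|/andP[i_notin_s s_uniq] v_le1 disj].
  by rewrite normr0.
rewrite !fctE /=; have [vi0|vi_neq0] := eqVneq (v i x) 0.
  rewrite vi0 scaler0 add0r; apply: IH => // j k js ks.
  by apply: disj; rewrite in_cons ?js ?ks orbT.
rewrite sign_sum0 ?addr0 ?normrZ ?normr_sign ?mul1r // => j js.
have j_in : j \in i :: s by rewrite in_cons js orbT.
have ij : i != j by apply: contraNneq i_notin_s => ->.
by case: (disj i j (mem_head _ _) j_in ij) => // vi0; rewrite vi0 eqxx in vi_neq0.
Qed.

End rkhs_geometry.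

Section rkhs_containing_continuous.
Variables (R : realType) (X : topologicalType) (H : RKHS R X).
Hypothesis hC : forall f : X -> R, continuous f -> rk_carrier H f.
Local Notation N := (rk_norm H).
Implicit Types (f g : X -> R) (M c t : R).

Lemma approximableB M1 M2 f1 f2 : approximable N M1 f1 -> approximable N M2 f2 ->
  approximable N (M1 + M2) (f1 - f2).
Proof.
move=> f1_approx f2_approx d d_gt0; have d2_gt0 : 0 < d / 2 by rewrite divr_gt0.
have [g1 [cg1 Ng1 fg1]] := f1_approx _ d2_gt0.
have [g2 [cg2 Ng2 fg2]] := f2_approx _ d2_gt0.
exists (g1 - g2); split.
- by move=> x; apply: continuousB; [exact: cg1 | exact: cg2].
- by rewrite (le_trans (rk_normB (hC cg1) (hC cg2))) // lerD.
- move=> x; have := fg1 x; have := fg2 x; rewrite /= !fctE /=.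
  have := ler_normB (f1 x - g1 x) (f2 x - g2 x).
  have -> : f1 x - g1 x - (f2 x - g2 x) = f1 x - f2 x - (g1 x - g2 x) by ring.
  lra.
Qed.

Lemma approximableZ a M f : 0 < a -> approximable N M f ->
  approximable N (a * M) (a *: f).
Proof.
move=> a_gt0 f_approx d d_gt0.
have [g [cg Ng fg]] := f_approx _ (divr_gt0 d_gt0 a_gt0).
exists (a *: g); split.
- by move=> x; apply: continuousZ; [exact: cst_continuous | exact: cg].
- by rewrite (rk_normZ _ (hC cg)) gtr0_norm // ler_wpM2l // ltW.
- move=> x; rewrite !fctE /= -scalerBr normrZ gtr0_norm //.
  by rewrite -ler_pdivlMl // mulrC fg.
Qed.

Lemma approximable_scale r c : 0 < r ->
    (forall f, continuous f -> (forall x, `|f x| <= r) -> approximable N c f) ->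
  forall t f, 0 < t -> continuous f -> (forall x, `|f x| <= t) ->
  approximable N (c / r * t) f.
Proof.
move=> r_gt0 ball_approx t f t_gt0 cf f_le.
have -> : f = (t / r) *: ((r / t) *: f).
  by rewrite scalerA mulrA divfK ?gt_eqF // mulrV ?unitfE ?gt_eqF // scale1r.
rewrite (_ : c / r * t = t / r * c); last by ring.
apply: approximableZ; first by rewrite divr_gt0.
apply: ball_approx => [x|x].
  by move: (r / t) => a; apply: continuousZ; [exact: cst_continuous | exact: cf].
by rewrite !fctE /= normrZ gtr0_norm ?divr_gt0 // mulrAC ler_pdivrMr // ler_pM2l.
Qed.

Lemma approximation_sequence c f :
    (forall t g, 0 < t -> continuous g -> (forall x, `|g x| <= t) ->
      approximable N (c * t) g) ->
  continuous f -> (forall x, `|f x| <= 1) ->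
  exists h : nat -> X -> R, h 0%N = f /\ forall j, [/\ continuous (h j),
    forall x, `|h j x| <= 2 ^- j & N (h j - h j.+1) <= c * 2 ^- j].
Proof.
move=> approx cf f_le1.
have invexp2_gt0 k : 0 < 2 ^- k :> R by rewrite invr_gt0 exprn_gt0.
have [||h [h0 hP]] := @dependent_choice_nat (X -> R)
  (fun j g => continuous g /\ forall x, `|g x| <= 2 ^- j)
  (fun j g g' => N (g - g') <= c * 2 ^- j) f.
- by split=> // x; rewrite expr0 invr1.
- move=> j g [cg g_le].
  have [g' [cg' Ng' gg']] := approx _ _ (invexp2_gt0 j) cg g_le _ (invexp2_gt0 j.+1).
  exists (g - g'); first split.
  + by move=> x; apply: continuousB; [exact: cg | exact: cg'].
  + by move=> x; rewrite /= !fctE /=.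
  + by rewrite subKr.
by exists h; split => // j; have [[ch h_le] Nh] := hP j.
Qed.

Lemma rk_norm_le_approximable c :
    (forall t g, 0 < t -> continuous g -> (forall x, `|g x| <= t) ->
      approximable N (c * t) g) ->
  forall f, continuous f -> (forall x, `|f x| <= 1) -> N f <= 2 * c.
Proof.
move=> approx f cf f_le1; have [h [<- hP]] := approximation_sequence approx cf f_le1.
apply: rk_norm_le_geometric => [j|j|x]; first by have [ch _ _] := hP j; exact: hC.
  by have [] := hP j.
apply/cvgrPdist_le => e e_gt0; have [K Ke] := exists_invexp2_lt e_gt0.
exists K => // n /= Kn; have [_ h_le _] := hP n.
rewrite sub0r normrN (le_trans (h_le x)) // (le_trans _ (ltW Ke)) //.
by rewrite lef_pV2 ?posrE ?exprn_gt0 // ler_eXn2l // ltr1n.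
Qed.

Lemma rk_norm_bounded_on_unit_ball :
  exists K, forall f, continuous f -> (forall x, `|f x| <= 1) -> N f <= K.
Proof.
have [M [g0 [r [r_gt0 cg0 ball_approx]]]] := uniform_Baire N.
have small_approx f : continuous f -> (forall x, `|f x| <= r) ->
    approximable N (M + M) f.
  move=> cf f_le; have -> : f = (g0 + f) - g0 by rewrite addrAC subrr add0r.
  apply: approximableB; apply: ball_approx => // x.
  - by apply: continuousD; [exact: cg0 | exact: cf].
  - by rewrite !fctE /= addrAC subrr add0r.
  - by rewrite subrr normr0 ltW.
exists (2 * ((M + M) / r)); apply: rk_norm_le_approximable => t g t_gt0 cg g_le.
exact: approximable_scale small_approx _ _ t_gt0 cg g_le.
Qed.

Lemma sign_sum_continuous (I : Type) (v : I -> X -> R) s :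
  (forall i, continuous (v i)) -> continuous (sign_sum H v s).
Proof.
move=> cv; elim: s => [|i s IH] /=; first exact: cst_continuous.
move=> x; apply: continuousD; last exact: IH.
by move: (_ ^+ _) => a; apply: continuousZ; [exact: cst_continuous | exact: cv].
Qed.

End rkhs_containing_continuous.

Section bumps.
Variables (R : realType) (X : pseudoMetricType R).

Lemma exists_bump (x : X) (e : R) : 0 < e -> exists phi : X -> R,
  [/\ continuous phi, phi x = 1, forall y, `|phi y| <= 1 &
      forall y, phi y != 0 -> ball x e y].
Proof.
move=> e_gt0; pose U := (ball x e)°.
have sep : uniform_separator [set x] (~` U).
  apply: (@point_uniform_separator R); first by rewrite closedC; exact: open_interior.
  by apply; exact: nbhsx_ballx.
pose u := @Urysohn X R [set x] (~` U).
exists (fun y => 1 - u y); split.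
- by move=> y; apply: continuousB; [exact: cst_continuous | exact: Urysohn_continuous].
- by rewrite /u (Urysohn_sub0 sep (ex_intro2 _ _ x erefl erefl)) subr0.
- move=> y; have : u y \in `[0, 1] := Urysohn_range (imageT u y).
  by rewrite in_itv /= ler_norml => /andP[? ?]; apply/andP; split; lra.
- move=> y; apply: contraNP => not_ball.
  have Uy : (~` U) y by move/interior_subset.
  by rewrite /u (Urysohn_sub1 sep (ex_intro2 _ _ y Uy erefl)) subrr.
Qed.

Lemma exists_disjoint_balls (s : seq X) : hausdorff_space X ->
  exists2 e, 0 < e & forall x y, x \in s -> y \in s -> x != y ->
    ball x e `&` ball y e = set0.
Proof.
rewrite ball_hausdorff => hausX.
have pair_sep (p : seq_sub s * seq_sub s) : \forall e \near 0^'+,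
    (val p.1 != val p.2 -> ball (val p.1) e `&` ball (val p.2) e = set0).
  case: p => -[x _] -[y _] /=; have [->|xy] := eqVneq x y; first by near=> e.
  have [[r1 r2] /eqP r12] := hausX x y xy.
  near=> e => _; rewrite -subset0 => z [xz yz]; rewrite -r12; split.
  - apply: le_ball xz; near: e; exact: nbhs_right_le.
  - apply: le_ball yz; near: e; exact: nbhs_right_le.
have [e [e_gt0 eP]] := filter_ex (filterI (nbhs_right_gt 0) (filter_forall _ pair_sep)).
by exists e => // x y xs ys; exact: (eP (SeqSub xs, SeqSub ys)).
Unshelve. all: by end_near.
Qed.

Variables (H : RKHS R X).
Hypothesis hC : forall f : X -> R, continuous f -> rk_carrier H f.

Lemma exists_sign_sum_of_bumps (s : seq X) (c : R) :
  hausdorff_space X -> uniq s ->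
  (forall x f, x \in s -> rk_carrier H f -> `|f x| <= c * rk_norm H f) ->
  exists S : X -> R, [/\ continuous S, forall y, `|S y| <= 1 &
    (size s)%:R <= c ^+ 2 * rk_norm H S ^+ 2].
Proof.
move=> hausX s_uniq evalc.
have [e e_gt0 disj] := exists_disjoint_balls s hausX.
have /choice[phi phiP] := fun x : X => exists_bump x e_gt0.
have phiH x : rk_carrier H (phi x) by have [cphi _ _ _] := phiP x; exact: hC.
exists (sign_sum H phi s); split.
- by apply: sign_sum_continuous => x; have [] := phiP x.
- move=> y; apply: sign_sum_le1 => // [x|x z xs zs xz]; first by have [] := phiP x.
  have [_ _ _ supp_x] := phiP x; have [_ _ _ supp_z] := phiP z.
  have [|/supp_x xy] := eqVneq (phi x y) 0; [by left | right].
  apply/eqP; apply: contraT => /supp_z zy.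
  have : (ball x e `&` ball z e) y by split.
  by rewrite disj.
have phi_norm x : x \in s -> 1 <= c ^+ 2 * rk_ip H (phi x) (phi x).
  move=> xs; have [_ phixx _ _] := phiP x.
  have := evalc x _ xs (phiH x); rewrite phixx normr1 => c_phi.
  by rewrite -(rk_normK (phiH x)) -exprMn; nra.
rewrite (rk_normK (sign_sum_carrier s phiH)) -sum1_size natr_sum.
rewrite (le_trans _ (ler_wpM2l (sqr_ge0 _) (sign_sum_sqnorm s phiH))) //.
rewrite mulr_sumr big_seq [X in _ <= X]big_seq; apply: ler_sum => x xs.
exact: phi_norm.
Qed.

End bumps.

Lemma exists_infinite_sublevel (R : realType) (T : Type) (C : T -> R) :
  ~ countable [set: T] -> exists n : nat, infinite_set [set x | C x <= n%:R].
Proof.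
move=> uncountT; apply: contrapT => all_finite; apply: uncountT.
have -> : [set: T] = \bigcup_(n in [set: nat]) [set x | C x <= n%:R].
  apply/seteqP; split => x // _; exists (Num.truncn (C x)).+1 => //.
  exact: ltW (truncnS_gt _).
apply: bigcup_countable => [|n _]; first exact: countableP.
by apply: finite_set_countable; apply: contrapT => inf_n; apply: all_finite; exists n.
Qed.

Theorem theorem1 (R : realType) (X : pseudoMetricType R) :
  hausdorff_space X -> compact [set: X] -> ~ countable [set: X] ->
  ~ (exists H : RKHS R X,
       forall f : X -> R, continuous f -> rk_carrier H f).
Proof.
move=> hausX _ uncountX [H hC].
have [K K_bound] := rk_norm_bounded_on_unit_ball hC.
have /choice[C evalC] := rk_eval_cont H.
have [n inf_n] := exists_infinite_sublevel C uncountX.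
pose m := (Num.truncn (n%:R ^+ 2 * K ^+ 2)).+1.
have [B B_sub mB] := infinite_set_fset m inf_n.
have [|S [cS S_le1 mass]] := @exists_sign_sum_of_bumps _ _ H hC (finmap.enum_fset B)
  n%:R hausX (finmap.fset_uniq B).
  move=> x f xB hf; apply: le_trans (evalC x f hf) _.
  by rewrite ler_wpM2r ?rk_norm_ge0 //; exact: B_sub.
have S_sqr_le : rk_norm H S ^+ 2 <= K ^+ 2.
  by rewrite ler_pXn2r ?nnegrE ?rk_norm_ge0 ?(le_trans (rk_norm_ge0 H S)) ?K_bound.
have := ler_wpM2l (sqr_ge0 (n%:R : R)) S_sqr_le.
have := truncnS_gt (n%:R ^+ 2 * K ^+ 2); rewrite -/m.
move: mB mass; rewrite -(ler_nat R); lra.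
Qed.
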